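(* Let $C_n=\frac1{n+1}\binom{2n}n$ be the $n$-th Catalan number. Then, as Laurent series in $z$, $$\sum_{n\ge0}C_nz^n=-13z^{-1}-3\left(4+2z^{-1}\right)\Psi(-z)+\left(-8z-14+4z^{-1}\right)\Psi^3(-z)+3\left(z^2-6z+9-4z^{-1}\right)\Psi^5(-z)\quad\text{modulo }27.$$
   Context: $\Psi(z)=\prod_{j\ge0}(1+z^{3^j})$, so $\Psi(-z)=\prod_{j\ge0}(1-z^{3^j})$. ''Modulo $27$'' means coefficientwise congruence of Laurent series in $z$. *)

From HB Require Import structures.
From mathcomp Require Import all_boot all_order all_algebra.
Set Implicit Arguments. Unset Strict Implicit. Unset Printing Implicit Defensive.
Import GRing.Theory.
Local Open Scope ring_scope.

(* Catalan number C_n = binom(2n,n)/(n+1) (the division is exact). *)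
Definition catalan (n : nat) : nat := ('C(n.*2, n) %/ n.+1)%N.

(* Truncation of Psi(-z) = prod_{j>=0} (1 - z^(3^j)) to its first N factors.
   For N > log_3 m, its coefficients of z^0..z^m agree with those of the
   infinite product (the remaining factors are 1 + O(z^(3^N))). *)
Definition psiN_trunc (N : nat) : {poly int} :=
  \prod_(j < N) (1 - 'X^(3 ^ j)).

(* z times the right-hand side of the identity, with Psi(-z) replaced by its
   truncation to N factors:
   z * RHS = -13 - 3(4z+2) Psi(-z) + (-8z^2-14z+4) Psi(-z)^3
             + 3(z^3-6z^2+9z-4) Psi(-z)^5. *)
Definition zRHS (N : nat) : {poly int} :=
  let Q := psiN_trunc N in
  - 13%:P
  - 3%:P * (4%:P * 'X + 2%:P) * Q
  + (- 8%:P * 'X^2 - 14%:P * 'X + 4%:P) * Q ^+ 3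
  + 3%:P * ('X^3 - 6%:P * 'X^2 + 9%:P * 'X - 4%:P) * Q ^+ 5.

From mathcomp Require Import all_boot all_order all_algebra.
From mathcomp Require Import ring zify.
Set Implicit Arguments.
Unset Strict Implicit.
Unset Printing Implicit Defensive.
Import GRing.Theory Num.Theory.
Local Open Scope ring_scope.

(* Both z C(z) and the right-hand side G are roots of F^2 - F + z modulo 27.
   For z C(z) this is Segner's recurrence, which follows from the first-order
   recurrence (n + 2) C_(n+1) = (4n + 2) C_n through the differential equation
   it encodes.  For G put Y = Psi(-z)^2: since (1 - a)^3 = 1 - a^3 (mod 3), the
   product telescopes to (1 - z) Y = 1 + S with S = 0 (mod 3), and then
   (1 - z)^5 (G^2 - G + z) is a polynomial in S whose coefficients of S^0, S^1
   and S^2 are divisible by 27.  Finally (G - z C)(G + z C - 1) = 0 (mod 27),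
   and G + z C - 1 has constant term -28, a unit mod 27.  All congruences are
   taken modulo z^(3^N), below which N factors of Psi(-z) are exact. *)

Lemma coefM_low (R : nzRingType) (p q : {poly R}) k :
  (forall i, (i < k)%N -> p`_i = 0) -> (p * q)`_k = p`_k * q`_0.
Proof.
move=> p_low; rewrite coefM big_ord_recr /= subnn big1 ?add0r // => i _.
by rewrite p_low ?mul0r.
Qed.

Lemma coefX_deriv (R : nzRingType) (p : {poly R}) i :
  ('X * p^`())`_i = p`_i *+ i.
Proof. by rewrite coefXM; case: i => [|i] //=; rewrite coef_deriv. Qed.

(* [p] lies in the ideal (d, X^K) of Z[X]. *)
Definition dvd_low (d : int) (K : nat) (p : {poly int}) : bool :=
  [forall i : 'I_K, (d %| p`_i)%Z].

Lemma dvd_lowP d K (p : {poly int}) :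
  reflect (forall i, (i < K)%N -> (d %| p`_i)%Z) (dvd_low d K p).
Proof.
apply: (iffP forallP) => [dvd_p i lt_iK | dvd_p i]; last exact: dvd_p.
exact: (dvd_p (Ordinal lt_iK)).
Qed.

Section DvdLow.
Variables (d : int) (K : nat).

Lemma dvd_low_le K' p : (K' <= K)%N -> dvd_low d K p -> dvd_low d K' p.
Proof.
by move=> leK /dvd_lowP dvd_p; apply/dvd_lowP => i lt_iK'; apply/dvd_p/(leq_trans lt_iK').
Qed.

Lemma dvd_lowD p q : dvd_low d K p -> dvd_low d K q -> dvd_low d K (p + q).
Proof.
move=> /dvd_lowP dvd_p /dvd_lowP dvd_q; apply/dvd_lowP => i lt_iK.
by rewrite coefD rpredD ?dvd_p ?dvd_q.
Qed.

Lemma dvd_lowB p q : dvd_low d K p -> dvd_low d K q -> dvd_low d K (p - q).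
Proof.
move=> /dvd_lowP dvd_p /dvd_lowP dvd_q; apply/dvd_lowP => i lt_iK.
by rewrite coefB rpredB ?dvd_p ?dvd_q.
Qed.

Lemma dvd_lowM e p q :
  dvd_low d K p -> dvd_low e K q -> dvd_low (d * e) K (p * q).
Proof.
move=> /dvd_lowP dvd_p /dvd_lowP dvd_q; apply/dvd_lowP => i lt_iK.
rewrite coefM; apply: rpred_sum => j _; have le_ji : (j <= i)%N := ltn_ord j.
by rewrite dvdz_mul ?dvd_p ?dvd_q // (leq_ltn_trans _ lt_iK) ?leq_subr.
Qed.

Lemma dvd_lowMr p q : dvd_low d K p -> dvd_low d K (p * q).
Proof.
move=> /dvd_lowP dvd_p; apply/dvd_lowP => i lt_iK.
rewrite coefM; apply: rpred_sum => j _.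
exact/dvdz_mulr/dvd_p/(leq_trans (ltn_ord j) lt_iK).
Qed.

Lemma dvd_lowC c : (d %| c)%Z -> dvd_low d K c%:P.
Proof. by move=> dvd_c; apply/dvd_lowP => -[|i] _; rewrite coefC ?dvdz0. Qed.

Lemma dvd_lowXn M : (K <= M)%N -> dvd_low d K 'X^M.
Proof.
move=> leKM; apply/dvd_lowP => i lt_iK.
by rewrite coefXn ltn_eqF ?dvdz0 // (leq_trans lt_iK).
Qed.

Lemma dvd_low_cancel (p q : {poly int}) :
  coprimez d q`_0 -> dvd_low d K (p * q) -> dvd_low d K p.
Proof.
move=> cop /dvd_lowP dvd_pq; apply/dvd_lowP => i; elim/ltn_ind: i => i IH lt_iK.
rewrite -(Gauss_dvdzl _ cop); have := dvd_pq i lt_iK.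
rewrite coefM big_ord_recr /= subnn rpredDl //; apply: rpred_sum => j _.
by apply: dvdz_mulr; apply: IH; rewrite ?(ltn_trans _ lt_iK).
Qed.

End DvdLow.

Lemma mul_bin_double n :
  (n.+1 * 'C(n.+1.*2, n.+1) = (n.*2.+1).*2 * 'C(n.*2, n))%N.
Proof.
have symC : 'C(n.*2.+1, n.+1) = 'C(n.*2.+1, n).
  by rewrite -bin_sub -addnn; [congr binomial; lia | lia].
rewrite -(mul_bin_diag n.*2.+2 n) /= -symC -doubleS -mul2n -mulnA.
by rewrite -(mul_bin_diag n.*2.+1 n) mulnA mul2n.
Qed.

Lemma dvdn_bin_double n : (n.+1 %| 'C(n.*2, n))%N.
Proof.
have -> : 'C(n.*2, n) = (n.+1 * ('C(n.*2, n) - 'C(n.*2, n.+1)))%N.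
  by rewrite mulnBr mul_bin_left -mulnBl -{2}addnn addnK subSnn mul1n.
exact: dvdn_mulr.
Qed.

Lemma catalanE n : (catalan n * n.+1 = 'C(n.*2, n))%N.
Proof. by rewrite /catalan divnK // dvdn_bin_double. Qed.

Lemma catalan_rec n : (n.+2 * catalan n.+1 = (4 * n + 2) * catalan n)%N.
Proof.
apply/eqP; rewrite -(eqn_pmul2l (ltn0Sn n)) [(n.+2 * _)%N]mulnC catalanE.
by rewrite mul_bin_double -catalanE -!mul2n; apply/eqP; ring.
Qed.

Definition catalan_poly n : {poly int} := \poly_(k < n) (catalan k)%:Z.

Lemma coef_catalan_poly n k :
  (catalan_poly n)`_k = if (k < n)%N then (catalan k)%:Z else 0.
Proof. exact: coef_poly. Qed.

Definition catalan_eq (p : {poly int}) : {poly int} := 'X * p ^+ 2 - p + 1.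

(* The recurrence [catalan_rec] is the linear equation
   (X - 4X^2) C' + (1 - 2X) C = 1; it is a combination of the quadratic
   equation [catalan_eq C = 0] and its derivative. *)
Lemma catalan_ode (p : {poly int}) :
  'X * p^`() - 4%:P * ('X * ('X * p^`())) - 1 + p - 2%:P * ('X * p) =
  - (catalan_eq p * (1 + 'X * (2%:P * p + 4%:P * ('X * p^`()))))
  - 'X * ((catalan_eq p)^`() * (1 - 'X * (2%:P * p))).
Proof. rewrite /catalan_eq !derivE /=; ring. Qed.

Lemma coef_catalan_eq_next (p : {poly int}) n :
  (forall i, (i <= n)%N -> (catalan_eq p)`_i = 0) -> p`_n.+1 = 0 ->
  (catalan_eq p)`_n.+1 *+ n.+2 = p`_n *+ (4 * n + 2).
Proof.
move=> E_low p_next.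
have := congr1 (fun q : {poly int} => q`_n.+1) (catalan_ode p).
move: (catalan_eq p) E_low => E E_low /=.
rewrite !(coefD, coefB, coefN, coefCM, coefX_deriv, coefXM, coef1) /=.
rewrite (@coefM_low _ E _ n.+1 E_low) coefM_low; last first.
  by move=> i lt_in; rewrite coef_deriv E_low ?mul0rn.
rewrite !(coefD, coefB, coefN, coefCM, coefXM, coef1, coef_deriv) /= p_next.
move=> key; transitivity (- (- (E`_n.+1 * (1 + 0)) - E`_n.+1 *+ n.+1 * (1 - 0))).
  by ring.
by rewrite -key; ring.
Qed.

Lemma coef_catalan_eq n k : (k < n)%N ->
  (catalan_eq (catalan_poly n))`_k.+1 =
  \sum_(i < k.+1) (catalan i)%:Z * (catalan (k - i))%:Z - (catalan_poly n)`_k.+1.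
Proof.
move=> lt_kn; rewrite /catalan_eq !coefD coefN coefXM coef1 /= addr0 expr2 coefM.
congr (_ - _); apply: eq_bigr => i _.
by rewrite !coef_catalan_poly !(leq_ltn_trans _ lt_kn) // ?leq_subr // -ltnS.
Qed.

Lemma coef0_catalan_eq n : (0 < n)%N -> (catalan_eq (catalan_poly n))`_0 = 0.
Proof.
by move=> n_gt0; rewrite /catalan_eq !coefD coefN coefXM coef1 coef_catalan_poly n_gt0.
Qed.

Lemma segner n :
  (catalan n.+1)%:Z = \sum_(i < n.+1) (catalan i)%:Z * (catalan (n - i))%:Z.
Proof.
elim/ltn_ind: n => n IH.
have E_low i : (i <= n)%N -> (catalan_eq (catalan_poly n.+1))`_i = 0.
  case: i => [|k] lt_kn; first exact: coef0_catalan_eq.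
  rewrite (@coef_catalan_eq n.+1 k (ltnW lt_kn)) coef_catalan_poly ltnS lt_kn.
  by rewrite -IH ?subrr.
have p_next : (catalan_poly n.+1)`_n.+1 = 0 by rewrite coef_catalan_poly ltnn.
have := coef_catalan_eq_next E_low p_next.
rewrite (@coef_catalan_eq n.+1 n (ltnSn n)) p_next subr0 coef_catalan_poly ltnSn => t_rec.
apply: (pmulrnI (ltn0Sn n.+1)); rewrite t_rec.
by rewrite !pmulrn !mulrzz -!PoszM mulnC [in RHS]mulnC catalan_rec.
Qed.

Lemma coef_catalan_eq_eq0 n i :
  (i < n)%N -> (catalan_eq (catalan_poly n))`_i = 0.
Proof.
case: i => [|k] lt_kn; first exact: coef0_catalan_eq.
by rewrite (coef_catalan_eq (ltnW lt_kn)) coef_catalan_poly lt_kn -segner subrr.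
Qed.

Definition catalan_quad (q : {poly int}) : {poly int} := q ^+ 2 - q + 'X.

Lemma catalan_quadX p : catalan_quad ('X * p) = 'X * catalan_eq p.
Proof. by rewrite /catalan_quad /catalan_eq; ring. Qed.

Lemma coef_catalan_quad_Xcatalan n i :
  (i <= n)%N -> (catalan_quad ('X * catalan_poly n))`_i = 0.
Proof.
by rewrite catalan_quadX coefXM; case: i => [|i] //= lt_in; rewrite coef_catalan_eq_eq0.
Qed.

Lemma psiN_trunc_sqr_mod3 N : exists T : {poly int},
  (1 - 'X) * psiN_trunc N ^+ 2 = 1 - 'X^(3 ^ N) + 3%:P * T.
Proof.
elim: N => [|N [T hT]].
  by exists 0; rewrite /psiN_trunc big_ord0 expr1n mulr1 expn0 mulr0 addr0.
rewrite /psiN_trunc big_ord_recr -/(psiN_trunc N) expnS mulnC exprM /=.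
move: hT; set a := 'X^(3 ^ N) => hT.
exists (a ^+ 2 - a + T * (1 - a) ^+ 2).
rewrite exprMn mulrA hT; ring.
Qed.

Lemma dvd_low_psiN_trunc_sqr N :
  dvd_low 3 (3 ^ N) ((1 - 'X) * psiN_trunc N ^+ 2 - 1).
Proof.
have [T ->] := psiN_trunc_sqr_mod3 N.
rewrite (_ : _ - 1 = 3%:P * T - 'X^(3 ^ N)); last by ring.
by apply: dvd_lowB; [apply/dvd_lowMr/dvd_lowC | apply: dvd_lowXn].
Qed.

Lemma psiN_trunc0 N : (psiN_trunc N)`_0 = 1.
Proof.
rewrite -horner_coef0 /psiN_trunc horner_prod; apply: big1 => j _.
by rewrite !hornerE expr0n expn_eq0 subr0.
Qed.

Definition rhs_poly (Y : {poly int}) : {poly int} :=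
  - 3%:P * (4%:P * 'X + 2%:P) + (- 8%:P * 'X^2 - 14%:P * 'X + 4%:P) * Y
  + 3%:P * ('X^3 - 6%:P * 'X^2 + 9%:P * 'X - 4%:P) * Y ^+ 2.

Lemma zRHSE N :
  zRHS N = - 13%:P + psiN_trunc N * rhs_poly (psiN_trunc N ^+ 2).
Proof. rewrite /zRHS /rhs_poly; ring. Qed.

(* The expansion of (1 - X)^5 (X - 7 + Y (rhs_poly Y)^2) in powers of S = (1 - X) Y - 1;
   the coefficients of S^0, S^1 and S^2 are divisible by 27. *)
Definition s0 : {poly int} :=
  7%:P - 8%:P * 'X - 6%:P * 'X^2 + 8%:P * 'X^3 - 'X^4.
Definition s1 : {poly int} :=
  28%:P - 60%:P * 'X + 43%:P * 'X^2 - 12%:P * 'X^3 - 6%:P * 'X^4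
  + 8%:P * 'X^5 - 'X^6.
Definition s2 : {poly int} :=
  48%:P - 140%:P * 'X + 170%:P * 'X^2 - 120%:P * 'X^3 + 56%:P * 'X^4
  - 20%:P * 'X^5 + 6%:P * 'X^6.
Definition s3 : {poly int} :=
  1216%:P - 4356%:P * 'X + 6726%:P * 'X^2 - 6152%:P * 'X^3 + 3744%:P * 'X^4
  - 1452%:P * 'X^5 + 274%:P * 'X^6.
Definition s4 : {poly int} :=
  624%:P - 2592%:P * 'X + 4545%:P * 'X^2 - 4416%:P * 'X^3 + 2538%:P * 'X^4
  - 792%:P * 'X^5 + 93%:P * 'X^6.
Definition s5 : {poly int} :=
  144%:P - 648%:P * 'X + 1161%:P * 'X^2 - 1044%:P * 'X^3 + 486%:P * 'X^4
  - 108%:P * 'X^5 + 9%:P * 'X^6.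

Lemma rhs_poly_expansion (Y : {poly int}) :
  let S := (1 - 'X) * Y - 1 in
  (1 - 'X) ^+ 5 * ('X - 7%:P + Y * rhs_poly Y ^+ 2) =
  27%:P * (s0 + s1 * S + s2 * S ^+ 2) + S ^+ 3 * (s3 + s4 * S + s5 * S ^+ 2).
Proof. rewrite /= /rhs_poly /s0 /s1 /s2 /s3 /s4 /s5; ring. Qed.

Lemma catalan_quad_zRHS N : let Q := psiN_trunc N in
  catalan_quad (zRHS N) = 27%:P * (7%:P - Q * rhs_poly (Q ^+ 2))
    + ('X - 7%:P + Q ^+ 2 * rhs_poly (Q ^+ 2) ^+ 2).
Proof. rewrite /catalan_quad zRHSE /=; ring. Qed.

Lemma dvd_low_catalan_quad_zRHS N : dvd_low 27 (3 ^ N) (catalan_quad (zRHS N)).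
Proof.
set Q := psiN_trunc N; set S := (1 - 'X) * Q ^+ 2 - 1.
have hS3 : dvd_low 27 (3 ^ N) (S ^+ 3).
  have hS := dvd_low_psiN_trunc_sqr N.
  by rewrite exprS expr2; exact: dvd_lowM hS (dvd_lowM hS hS).
rewrite catalan_quad_zRHS -/Q.
apply: dvd_lowD; first exact/dvd_lowMr/dvd_lowC.
apply: (@dvd_low_cancel _ _ _ ((1 - 'X) ^+ 5)).
  by rewrite -horner_coef0 !hornerE expr1n.
rewrite mulrC rhs_poly_expansion.
by apply: dvd_lowD; [apply/dvd_lowMr/dvd_lowC | apply: dvd_lowMr].
Qed.

Lemma coef0_zRHS N : (zRHS N)`_0 = - 27.
Proof.
by rewrite -horner_coef0 zRHSE /rhs_poly !hornerE horner_coef0 psiN_trunc0.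
Qed.

Theorem theorem13p2 (m : nat) :
  ((zRHS m.+1)`_m == (if m is k.+1 then (catalan k)%:Z else 0) %[mod 27])%Z.
Proof.
set G := zRHS m.+1; set H := 'X * catalan_poly m.
have dvdG : dvd_low 27 m.+1 (catalan_quad G).
  by apply: dvd_low_le (dvd_low_catalan_quad_zRHS m.+1); rewrite ltnW // ltn_expl.
have dvdH : dvd_low 27 m.+1 (catalan_quad H).
  by apply/dvd_lowP => i le_im; rewrite coef_catalan_quad_Xcatalan ?dvdz0.
have dvdGH : dvd_low 27 m.+1 (G - H).
  apply: (@dvd_low_cancel _ _ _ (G + H - 1)).
    by rewrite !coefB coefD coef0_zRHS coefXM coef1.
  have -> : (G - H) * (G + H - 1) = catalan_quad G - catalan_quad H.
    by rewrite /catalan_quad; ring.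
  exact: dvd_lowB.
have -> : (if m is k.+1 then (catalan k)%:Z else 0) = H`_m.
  by rewrite coefXM; case: (m) => [|k] //=; rewrite coef_catalan_poly ltnSn.
by rewrite eqz_mod_dvd -coefB; apply: (dvd_lowP _ _ _ dvdGH).
Qed.
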